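(* Let $(N,+,* )$ be a nilpotent ring and let $\circ$ be its adjoint operation $x\circ y=x+y+x*y$. Let $B,C$ be subgroups of $(N,\circ)$ such that every $x\in N$ can be written uniquely as $x=x_1\circ x_2$ with $x_1\in B$, $x_2\in C$, and define $x\bullet y=x_1\circ y\circ x_2$; then $(N,+,\bullet)$ is a left brace. Let $r(x,y)=(\sigma_x(y),\tau_y(x))$ be the Yang–Baxter map of $(N,+,\bullet)$ and let $X\subseteq N$ be such that $(X,r)$ is a solution of the set-theoretic Yang–Baxter equation. Let $f:X\to X$ be $\mathcal G(X,r)$-equivariant and let $g:X\to X$ satisfy $g(x)*c=c*g(x)$ for all $x\in X$, $c\in C$. Define $k_1(x)=f(x)*g(x)$ and $k_2(x)=f(x)+f(x)*g(x)$, and assume $k_1(X),k_2(X)\subseteq X$. For $i\in\{1,2\}$, if $f(x)*g(\tau_{k_i(y)}(x))=f(x)*g(\tau_y(x))$ for all $x,y\in X$, then $k_i$ is a reflection of $(X,r)$.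
   Context: A (left) brace is a triple $(B,+,\circ)$ with $(B,+)$ abelian group, $(B,\circ)$ group, and $x\circ(y+z)=x\circ y+x\circ z-x$. For a nilpotent (associative, not necessarily unital) ring, $(N,+,\circ)$ with the adjoint operation is a brace. The Yang–Baxter map of a brace $(N,+,\bullet)$ is $r(x,y)=(\sigma_x(y),\tau_y(x))$ with $\sigma_x(y)=x\bullet y-x$ and $\tau_y(x)=(\sigma_x(y))^{-1}\bullet x-(\sigma_x(y))^{-1}$, inverses taken in $(N,\bullet)$. For $X\subseteq N$, $(X,r)$ is a solution of the set-theoretic Yang–Baxter equation if $r(X\times X)\subseteq X\times X$ and $(\mathrm{id}\times r)(r\times\mathrm{id})(\mathrm{id}\times r)=(r\times\mathrm{id})(\mathrm{id}\times r)(r\times\mathrm{id})$ on $X^3$. A map $k:X\to X$ is a reflection of $(X,r)$ if $r(\mathrm{id}\times k)r(\mathrm{id}\times k)=(\mathrm{id}\times k)r(\mathrm{id}\times k)r$ as maps $X\times X\to X\times X$; $k$ is $\mathcal G(X,r)$-equivariant if $k\sigma_x=\sigma_x k$ on $X$ for every $x\in X$. *)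

(* the additive group of the ring is a zmodType;
   the (non-unital, associative) multiplication is an explicit operation. *)
From HB Require Import structures.
From mathcomp Require Import all_boot all_algebra.
From Stdlib Require Import ClassicalEpsilon.
Set Implicit Arguments. Unset Strict Implicit. Unset Printing Implicit Defensive.
Import GRing.Theory.
Local Open Scope ring_scope.

Section Defs.
Variable N : zmodType.
Variable mul : N -> N -> N.

Fixpoint mprod (x : N) (s : seq N) : N :=
  match s with [::] => x | y :: s' => mprod (mul x y) s' end.

(* the ring is nilpotent: N^(n+1) = 0 for some n *)
Definition nilpotent_mul : Prop :=
  exists n : nat, forall (x : N) (s : seq N), size s = n -> mprod x s = 0.

Definition adj (x y : N) : N := x + y + mul x y.

Definition is_subgroup (op : N -> N -> N) (e : N) (B : N -> Prop) : Prop :=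
  [/\ B e,
      (forall x y, B x -> B y -> B (op x y)) &
      (forall x, B x -> exists y, [/\ B y, op x y = e & op y x = e])].

Definition is_group (op : N -> N -> N) : Prop :=
  (forall x y z, op x (op y z) = op (op x y) z) /\
  exists e, (forall x, op e x = x /\ op x e = x) /\
            (forall x, exists y, op x y = e /\ op y x = e).

Definition is_left_brace (op : N -> N -> N) : Prop :=
  is_group op /\ forall x y z, op x (y + z) = op x y + op x z - x.

Variables B C : N -> Prop.

Definition dec (x : N) : N * N :=
  epsilon (inhabits (0, 0)) (fun p => [/\ B p.1, C p.2 & x = adj p.1 p.2]).

Definition bullet (x y : N) : N := adj (adj (dec x).1 y) (dec x).2.

End Defs.

Section YB.
Variable N : zmodType.
Variable op : N -> N -> N.

(* inverse in (N, op); the identity of a brace is 0 *)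
Definition binv (x : N) : N :=
  epsilon (inhabits 0) (fun y => op x y = 0 /\ op y x = 0).

Definition sigma (x y : N) : N := op x y - x.
Definition tau (y x : N) : N := op (binv (sigma x y)) x - binv (sigma x y).
Definition ybr (p : N * N) : N * N := (sigma p.1 p.2, tau p.2 p.1).

End YB.

Section Sol.
Variable T : Type.
Variable r : T * T -> T * T.

Definition r12 (t : T * T * T) : T * T * T :=
  let: (x, y, z) := t in let: (a, b) := r (x, y) in (a, b, z).
Definition r23 (t : T * T * T) : T * T * T :=
  let: (x, y, z) := t in let: (b, c) := r (y, z) in (x, b, c).
Definition idk (k : T -> T) (p : T * T) : T * T := (p.1, k p.2).

Variable X : T -> Prop.

Definition is_YB_solution : Prop :=
  (forall x y, X x -> X y -> X (r (x, y)).1 /\ X (r (x, y)).2) /\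
  (forall x y z, X x -> X y -> X z ->
     r23 (r12 (r23 (x, y, z))) = r12 (r23 (r12 (x, y, z)))).

Definition is_reflection (k : T -> T) : Prop :=
  forall x y, X x -> X y ->
    r (idk k (r (idk k (x, y)))) = idk k (r (idk k (r (x, y)))).

End Sol.

(* k is G(X,r)-equivariant: k sigma_x = sigma_x k on X for x in X *)
Definition equivariant (N : zmodType) (op : N -> N -> N) (X : N -> Prop)
  (k : N -> N) : Prop :=
  forall x y, X x -> X y -> k (sigma op x y) = sigma op x (k y).

(* Write a = a1 o a2 with a1 in B and a2 in C.  Then a . z = a + S_a(z), where
   S_a(z) = z + a1 z + z a2 + a1 z a2 is (1 + a1) z (1 + a2) in the unitization, so
   sigma_a = S_a.  This map is additive, which makes (N, +, .) a brace, and it commutes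
   with right multiplication by any v commuting with C.  Together with the equivariance
   of f this gives sigma_a (k_i z) = K_i (sigma_a z) z, with K_1 u z = f(u) g(z) and
   K_2 u z = f(u) + f(u) g(z).  For any k twisted in this way, the brace identities
   sigma_{sigma_x y} (tau_y x) = x and tau_{tau_y x} (sigma_x y) = y reduce both
   components of the reflection equation to K x (tau_{k y} x) = K x (tau_y x), which is
   the hypothesis of the theorem. *)
From mathcomp Require Import all_boot all_algebra.
From Stdlib Require Import ClassicalEpsilon.
Import GRing.Theory.
Set Implicit Arguments. Unset Strict Implicit.
Local Open Scope ring_scope.

Section LeftBrace.
Variables (N : zmodType) (op : N -> N -> N).
Hypothesis brace : is_left_brace op.

Lemma opA x y z : op x (op y z) = op (op x y) z.
Proof. by case: brace => [[]]. Qed.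

Lemma opD x y z : op x (y + z) = op x y + op x z - x.
Proof. by case: brace. Qed.

Lemma op_unit_eq0 e : (forall x, op e x = x) -> e = 0.
Proof.
move=> e_unit; have := opD e 0 0.
by rewrite addr0 !e_unit add0r sub0r => /eqP; rewrite eq_sym oppr_eq0 => /eqP.
Qed.

Lemma op_group_unit0 :
  (forall x, op 0 x = x /\ op x 0 = x) /\ (forall x, exists y, op x y = 0 /\ op y x = 0).
Proof.
case: brace => [[_ [e [e_unit e_inv]]] _].
by rewrite -(op_unit_eq0 (fun x => (e_unit x).1)).
Qed.

Lemma op0x x : op 0 x = x. Proof. exact: (op_group_unit0.1 x).1. Qed.
Lemma opx0 x : op x 0 = x. Proof. exact: (op_group_unit0.1 x).2. Qed.

Lemma binvP x : op x (binv op x) = 0 /\ op (binv op x) x = 0.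
Proof. exact: (epsilon_spec (inhabits 0) _ (op_group_unit0.2 x)). Qed.

Lemma opI a : injective (op a).
Proof.
move=> u v e; have [_ inv_a] := binvP a.
by rewrite -(op0x u) -(op0x v) -inv_a -!opA e.
Qed.

Lemma opN s z : op s (- z) = s + s - op s z.
Proof.
have := opD s z (- z); rewrite subrr opx0 => /eqP; rewrite eq_sym subr_eq => /eqP <-.
by rewrite addrC addKr.
Qed.

Lemma op_sigma a u : op a u = a + sigma op a u.
Proof. by rewrite /sigma addrC subrK. Qed.

Lemma sigmaD a u v : sigma op a (u + v) = sigma op a u + sigma op a v.
Proof. by rewrite /sigma opD addrACA addrA. Qed.

Lemma sigma_inj a : injective (sigma op a).
Proof. by move=> u v /addIr /opI. Qed.

Lemma sigma_sigma_tau x y : sigma op (sigma op x y) (tau op y x) = x.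
Proof.
rewrite /tau; set s := sigma op x y; have [s_inv _] := binvP s.
(* s . (s^-1 . x - s^-1) = x + (s + s - 0) - s *)
by rewrite /sigma opD opN opA s_inv op0x subr0 addrA !addrK.
Qed.

Lemma op_sigma_tau x y : op (sigma op x y) (tau op y x) = op x y.
Proof. by rewrite op_sigma sigma_sigma_tau addrC -op_sigma. Qed.

Lemma tau_tau_sigma x y : tau op (tau op y x) (sigma op x y) = y.
Proof.
apply: (@opI x).
by have := op_sigma_tau (sigma op x y) (tau op y x); rewrite sigma_sigma_tau !op_sigma_tau.
Qed.

Lemma reflection_of_sigma_twist (X : N -> Prop) (k : N -> N) (K : N -> N -> N)
    (sigmaX : forall x y, X x -> X y -> X (sigma op x y))
    (tauX : forall x y, X x -> X y -> X (tau op y x))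
    (kX : forall x, X x -> X (k x))
    (sigma_k : forall a z, X a -> X z -> sigma op a (k z) = K (sigma op a z) z)
    (K_tau : forall x y, X x -> X y -> K x (tau op (k y) x) = K x (tau op y x)) :
  is_reflection (ybr op) X k.
Proof.
move=> x y Xx Xy; rewrite /ybr /idk /=.
set a := sigma op x y; set b := tau op y x.
have Xa : X a := sigmaX _ _ Xx Xy.
have Xb : X b := tauX _ _ Xx Xy.
have Xky := kX _ Xy; have Xkb := kX _ Xb.
have Xxky := sigmaX _ _ Xx Xky.
have Xkyx := tauX _ _ Xx Xky.
have Xakb := sigmaX _ _ Xa Xkb.
have Xkba := tauX _ _ Xa Xkb.
have first_eq : sigma op (sigma op x (k y)) (k (tau op (k y) x)) = sigma op a (k b).
  by rewrite [LHS]sigma_k // [RHS]sigma_k // /a /b !sigma_sigma_tau K_tau.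
congr (_, _); first exact: first_eq.
(* sigma_{sigma_u v} (tau_v u) = u, so compare the second components under sigma of the common first one. *)
apply: (@sigma_inj (sigma op (sigma op x (k y)) (k (tau op (k y) x)))).
rewrite sigma_sigma_tau first_eq [RHS]sigma_k //.
by rewrite sigma_sigma_tau K_tau // tau_tau_sigma sigma_k.
Qed.

End LeftBrace.

Section AdjointOperation.
Variables (N : zmodType) (mul : N -> N -> N).
Hypothesis mulA : forall x y z, mul x (mul y z) = mul (mul x y) z.
Hypothesis mulDl : forall x y z, mul (x + y) z = mul x z + mul y z.
Hypothesis mulDr : forall x y z, mul x (y + z) = mul x y + mul x z.

Local Notation "x ∘ y" := (adj mul x y) (at level 40, left associativity).

Lemma mul0x x : mul 0 x = 0.
Proof. by apply: (@addrI _ (mul 0 x)); rewrite -mulDl !addr0. Qed.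

Lemma mulx0 x : mul x 0 = 0.
Proof. by apply: (@addrI _ (mul x 0)); rewrite -mulDr !addr0. Qed.

Lemma adjA x y z : x ∘ (y ∘ z) = x ∘ y ∘ z.
Proof.
rewrite /adj !mulDr !mulDl mulA !addrA.
by rewrite [LHS](ACl (1*2*5*3*6*4*7)).
Qed.

Lemma adj0x x : 0 ∘ x = x.
Proof. by rewrite /adj mul0x add0r addr0. Qed.

Lemma adjx0 x : x ∘ 0 = x.
Proof. by rewrite /adj mulx0 !addr0. Qed.

Definition sandwich (a1 a2 z : N) : N :=
  z + mul a1 z + mul z a2 + mul (mul a1 z) a2.

Lemma adj_sandwich a1 a2 z : a1 ∘ z ∘ a2 = a1 ∘ a2 + sandwich a1 a2 z.
Proof.
rewrite /adj /sandwich !mulDl !addrA.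
by rewrite [LHS](ACl (1*4*5*2*3*6*7)).
Qed.

Lemma sandwichD a1 a2 y z :
  sandwich a1 a2 (y + z) = sandwich a1 a2 y + sandwich a1 a2 z.
Proof.
rewrite /sandwich !mulDl !mulDr !mulDl !addrA.
by rewrite [LHS](ACl (1*3*5*7*2*4*6*8)).
Qed.

Lemma sandwichMr a1 a2 w v :
  mul v a2 = mul a2 v -> sandwich a1 a2 (mul w v) = mul (sandwich a1 a2 w) v.
Proof.
move=> va2; rewrite /sandwich !mulDl !mulA -[mul (mul w v) a2]mulA va2.
by rewrite -[mul (mul (mul a1 w) v) a2]mulA va2 !mulA.
Qed.

End AdjointOperation.

Section ExactFactorization.
Variables (N : zmodType) (mul : N -> N -> N).
Hypothesis mulA : forall x y z, mul x (mul y z) = mul (mul x y) z.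
Hypothesis mulDl : forall x y z, mul (x + y) z = mul x z + mul y z.
Hypothesis mulDr : forall x y z, mul x (y + z) = mul x y + mul x z.
Variables B C : N -> Prop.
Hypothesis HB : is_subgroup (adj mul) 0 B.
Hypothesis HC : is_subgroup (adj mul) 0 C.
Hypothesis Hfact : forall x : N, exists! p : N * N,
  [/\ B p.1, C p.2 & x = adj mul p.1 p.2].

Local Notation "x ∘ y" := (adj mul x y) (at level 40, left associativity).
Local Notation "x • y" := (bullet mul B C x y) (at level 40, left associativity).
Local Notation dec := (dec mul B C).

Lemma decP x : [/\ B (dec x).1, C (dec x).2 & x = (dec x).1 ∘ (dec x).2].
Proof.
have [p [p_fact _]] := Hfact x.
exact: (epsilon_spec (inhabits (0, 0)) (fun p => [/\ B p.1, C p.2 & x = p.1 ∘ p.2])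
          (ex_intro _ p p_fact)).
Qed.

Lemma dec_uniq x p : B p.1 -> C p.2 -> x = p.1 ∘ p.2 -> dec x = p.
Proof.
move=> Bp1 Cp2 x_fact; have [q [_ q_uniq]] := Hfact x.
by rewrite -(q_uniq _ (decP x)) (q_uniq p).
Qed.

Lemma adj_shuffle a b c d : a ∘ (b ∘ c) ∘ d = a ∘ b ∘ (c ∘ d).
Proof. by rewrite !(adjA mulA mulDl mulDr). Qed.

Lemma dec_bullet x y : dec (x • y) = ((dec x).1 ∘ (dec y).1, (dec y).2 ∘ (dec x).2).
Proof.
case: HB => _ Bmul _; case: HC => _ Cmul _.
case: (decP x) => Bx1 Cx2 _; case: (decP y) => By1 Cy2 y_fact.
apply: dec_uniq => /=; [exact: Bmul | exact: Cmul |].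
by rewrite /bullet {1}y_fact adj_shuffle.
Qed.

Lemma bulletA x y z : x • (y • z) = x • y • z.
Proof.
by rewrite [x • y • z]/bullet dec_bullet /= /bullet !(adjA mulA mulDl mulDr).
Qed.

Lemma dec0 : dec 0 = (0, 0).
Proof.
case: HB => B0 _ _; case: HC => C0 _ _.
by apply: dec_uniq => //=; rewrite (adj0x mulDl).
Qed.

Lemma bullet0x x : 0 • x = x.
Proof. by rewrite /bullet dec0 /= (adj0x mulDl) (adjx0 mulDr). Qed.

Lemma bulletx0 x : x • 0 = x.
Proof. by rewrite /bullet (adjx0 mulDr); case: (decP x). Qed.

Lemma bullet_inv x : exists y, x • y = 0 /\ y • x = 0.
Proof.
case: HB => _ _ Binv; case: HC => _ _ Cinv.
case: (decP x) => Bx1 Cx2 x_fact.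
have [b [Bb x1b bx1]] := Binv _ Bx1.
have [c [Cc x2c cx2]] := Cinv _ Cx2.
have dec_bc : dec (b ∘ c) = (b, c) by apply: dec_uniq.
exists (b ∘ c); split.
  by rewrite /bullet adj_shuffle x1b (adj0x mulDl) cx2.
by rewrite /bullet dec_bc /= {1}x_fact adj_shuffle bx1 x2c (adj0x mulDl).
Qed.

Lemma bulletE a z : a • z = a + sandwich mul (dec a).1 (dec a).2 z.
Proof. by case: (decP a) => _ _ a_fact; rewrite /bullet (adj_sandwich mulDl) -a_fact. Qed.

Lemma sigma_bullet a z : sigma (bullet mul B C) a z = sandwich mul (dec a).1 (dec a).2 z.
Proof. by rewrite /sigma bulletE addrC addKr. Qed.

Lemma bulletD x y z : x • (y + z) = x • y + x • z - x.
Proof.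
rewrite !bulletE (sandwichD mulDl mulDr).
set Sy := sandwich _ _ _ y; set Sz := sandwich _ _ _ z.
by rewrite [in RHS]addrACA [in RHS]addrAC addrK.
Qed.

Lemma bullet_left_brace : is_left_brace (bullet mul B C).
Proof.
split; last exact: bulletD.
split; first exact: bulletA.
exists 0; split; last exact: bullet_inv.
by move=> x; rewrite bullet0x bulletx0.
Qed.

Lemma sigma_bulletMr a w v : (forall c, C c -> mul v c = mul c v) ->
  sigma (bullet mul B C) a (mul w v) = mul (sigma (bullet mul B C) a w) v.
Proof.
move=> v_central; rewrite !sigma_bullet (sandwichMr mulA mulDl) //.
by case: (decP a) => _ Ca2 _; exact: v_central.
Qed.

End ExactFactorization.

Theorem mainTheorem6 (N : zmodType) (mul : N -> N -> N)
  (mulA : forall x y z, mul x (mul y z) = mul (mul x y) z)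
  (mulDl : forall x y z, mul (x + y) z = mul x z + mul y z)
  (mulDr : forall x y z, mul x (y + z) = mul x y + mul x z)
  (nilN : nilpotent_mul mul)
  (B C : N -> Prop)
  (HB : is_subgroup (adj mul) 0 B) (HC : is_subgroup (adj mul) 0 C)
  (Hfact : forall x : N, exists! p : N * N,
      [/\ B p.1, C p.2 & x = adj mul p.1 p.2])
  (X : N -> Prop)
  (Hsol : is_YB_solution (ybr (bullet mul B C)) X)
  (f g : N -> N)
  (fX : forall x, X x -> X (f x)) (gX : forall x, X x -> X (g x))
  (Hf : equivariant (bullet mul B C) X f)
  (Hg : forall x c, X x -> C c -> mul (g x) c = mul c (g x))
  (k1X : forall x, X x -> X (mul (f x) (g x)))
  (k2X : forall x, X x -> X (f x + mul (f x) (g x))) :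
  is_left_brace (bullet mul B C) /\
  ((forall x y, X x -> X y ->
      mul (f x) (g (tau (bullet mul B C) (mul (f y) (g y)) x))
      = mul (f x) (g (tau (bullet mul B C) y x))) ->
    is_reflection (ybr (bullet mul B C)) X (fun x => mul (f x) (g x))) /\
  ((forall x y, X x -> X y ->
      mul (f x) (g (tau (bullet mul B C) (f y + mul (f y) (g y)) x))
      = mul (f x) (g (tau (bullet mul B C) y x))) ->
    is_reflection (ybr (bullet mul B C)) X (fun x => f x + mul (f x) (g x))).
Proof.
have brace := bullet_left_brace mulA mulDl mulDr HB HC Hfact.
have [XrX _] := Hsol.
have sigmaX x y : X x -> X y -> X (sigma (bullet mul B C) x y).
  by move=> Xx Xy; exact: (XrX x y Xx Xy).1.
have tauX x y : X x -> X y -> X (tau (bullet mul B C) y x).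
  by move=> Xx Xy; exact: (XrX x y Xx Xy).2.
have sigma_fg a z : X a -> X z ->
    sigma (bullet mul B C) a (mul (f z) (g z)) = mul (f (sigma (bullet mul B C) a z)) (g z).
  by move=> Xa Xz; rewrite (sigma_bulletMr mulA mulDl Hfact) ?Hf // => c; exact: Hg.
split; first exact: brace.
split=> K_tau.
  exact: (reflection_of_sigma_twist brace (K := fun u z => mul (f u) (g z))).
apply: (reflection_of_sigma_twist brace (K := fun u z => f u + mul (f u) (g z))) => //=.
- by move=> a z Xa Xz; rewrite sigmaD // sigma_fg // Hf.
- by move=> x y Xx Xy; rewrite K_tau.
Qed.
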